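(* In the qubit–battery model, write (up to an irrelevant global phase) the target unitary as $V_{00}=\cos\theta$, $V_{01}=\sin\theta\,e^{i\gamma}$, $V_{10}=\sin\theta\,e^{i(\gamma+\varphi)}$, $V_{11}=-\cos\theta\,e^{i\varphi}$ with $\theta\in[0,\pi/2]$, $\gamma,\varphi\in\mathbb R$. Let $U_{SB}=|0\rangle\langle0|_S\otimes|0\rangle\langle0|_B+\sum_{n\ge1}\sum_{i,j}U^{(n)}_{ij}|i\rangle\langle j|_S\otimes|n-i\rangle\langle n-j|_B$ where, for a fixed $\bar\theta\in[0,\pi/2]$ and arbitrary real phases $\alpha_n,\gamma_n,\varphi_n$, $$U^{(n)}_{00}=\cos\bar\theta\,e^{i\alpha_n},\ U^{(n)}_{01}=\sin\bar\theta\,e^{i(\alpha_n+\gamma_n)},\ U^{(n)}_{10}=\sin\bar\theta\,e^{i(\alpha_n+\gamma_n+\varphi_n)},\ U^{(n)}_{11}=-\cos\bar\theta\,e^{i(\alpha_n+\varphi_n)}.$$ Then for every normalized battery state $|\beta\rangle_B=\sum_{n\ge1}\beta_n|n\rangle_B$ with $\beta_0=0$, $$\epsilon_C(\mathbf\Phi_{|\beta\rangle},\mathcal V)\ \ge\ \sin^2(\bar\theta-\theta)+\frac14\Big[\sin(2\bar\theta)\sin(2\theta)\,Q^{(1)}_\beta+\sin^2\bar\theta\,\sin^2\theta\,Q^{(2)}_\beta\Big],$$ where $Q^{(1)}_\beta=2-2\sum_{n\ge1}|\beta_n\beta_{n+1}|$ and $Q^{(2)}_\beta=2\big(1-\sum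_{n\ge1}|\beta_n\beta_{n+2}|\big)$.
   Context: Qubit–battery model: qubit $S$ with energy basis $|0\rangle,|1\rangle$, $H_S=\frac\omega2(|1\rangle\langle1|-|0\rangle\langle0|)$; oscillator $B$ with basis $\{|n\rangle\}_{n\ge0}$, $H_B=\omega\sum_n n|n\rangle\langle n|$. $V_{ij}=\langle i|V_S|j\rangle$, $\mathcal V(\cdot)=V_S\cdot V_S^\dagger$. Channel $\mathbf\Phi_{|\beta\rangle}(\rho)=\mathrm{Tr}_B[U_{SB}(\rho\otimes|\beta\rangle\langle\beta|)U_{SB}^\dagger]$, Kraus operators $K^{(n)}={}_B\langle n|U_{SB}|\beta\rangle_B$, Choi infidelity $\epsilon_C=1-\frac14\sum_n|\mathrm{Tr}[V_S^\dagger K^{(n)}]|^2$. *)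

From HB Require Import structures.
From mathcomp Require Import all_boot all_order all_algebra.
From mathcomp Require Import complex.
From mathcomp Require Import all_classical all_reals all_analysis.
Set Implicit Arguments. Unset Strict Implicit. Unset Printing Implicit Defensive.
Import Order.TTheory GRing.Theory Num.Theory.
Import numFieldNormedType.Exports.
Local Open Scope ring_scope.
Local Open Scope complex_scope.

Section QubitBattery.
Variable R : realType.
Local Notation C := (R[i]).

Definition expi (a : R) : C := (cos a) +i* (sin a).

Definition sqnormC (z : C) : R := let: a +i* b := z in a ^+ 2 + b ^+ 2.
Definition absC (z : C) : R := Num.sqrt (sqnormC z).

Definition Vtarget (theta gamma phi : R) : 'M[C]_2 :=
  \matrix_(i < 2, j < 2)
    if (i == 0 :> nat) && (j == 0 :> nat) then (cos theta)%:C
    else if (i == 0 :> nat) then (sin theta)%:C * expi gamma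
    else if (j == 0 :> nat) then (sin theta)%:C * expi (gamma + phi)
    else - (cos theta)%:C * expi phi.

(* The 2x2 block U^{(n)} (meaningful for n >= 1). *)
Definition Ublock (thb : R) (al ga ph : nat -> R) (n : nat) : 'M[C]_2 :=
  \matrix_(i < 2, j < 2)
    if (i == 0 :> nat) && (j == 0 :> nat) then (cos thb)%:C * expi (al n)
    else if (i == 0 :> nat) then (sin thb)%:C * expi (al n + ga n)
    else if (j == 0 :> nat) then (sin thb)%:C * expi (al n + ga n + ph n)
    else - (cos thb)%:C * expi (al n + ph n).

(* Matrix element <i|_S <k|_B U_SB |j>_S |m>_B of
   U_SB = |0><0| (x) |0><0| + sum_{n>=1} sum_{i,j} U^{(n)}_{ij} |i><j| (x) |n-i><n-j|.
   The (i,j,n) term contributes iff k = n - i and m = n - j (both >= 0). *)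
Definition USB_elem (thb : R) (al ga ph : nat -> R)
    (i : 'I_2) (k : nat) (j : 'I_2) (m : nat) : C :=
  (if [&& (i == 0 :> nat), (k == 0), (j == 0 :> nat) & (m == 0)] then 1 else 0)
  + (if (1 <= k + i)%N && (k + i == m + j)%N
     then Ublock thb al ga ph (k + i)%N i j else 0).

(* Kraus operator K^{(n)} = <n|_B U_SB |beta>_B, with |beta> = sum_m beta_m |m>.
   Only m = n + i - j <= n+1 can contribute, so the sum over m is finite. *)
Definition Kraus (thb : R) (al ga ph : nat -> R) (beta : nat -> C) (n : nat)
  : 'M[C]_2 :=
  \matrix_(i < 2, j < 2) \sum_(m < n.+2) USB_elem thb al ga ph i n j m * beta m.

Definition adjmx (M : 'M[C]_2) : 'M[C]_2 := (map_mx (@conjc R) M)^T.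

(* infinite sums are written as limits of partial sums (limn);
   all these series converge (nonnegative terms, bounded). *)
Definition choi_infidelity (V : 'M[C]_2) (K : nat -> 'M[C]_2) : R :=
  1 - 4^-1 * limn (fun N => \sum_(0 <= n < N) sqnormC (\tr (adjmx V *m K n))).

Definition Q1 (beta : nat -> C) : R :=
  2 - 2 * limn (fun N => \sum_(1 <= n < N) absC (beta n * beta n.+1)).
Definition Q2 (beta : nat -> C) : R :=
  2 * (1 - limn (fun N => \sum_(1 <= n < N) absC (beta n * beta n.+2))).

End QubitBattery.

(* Only the blocks U^(n) and U^(n+1) reach K^(n): its diagonal entries are
   cos(thb) beta_n and its off-diagonal ones sin(thb) beta_(n-1), sin(thb) beta_(n+1),
   up to phases.  The triangle inequality therefore gives
     |Tr[V^+ K^(n)]| <= 2 cos(th) cos(thb) |beta_n|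
                        + sin(th) sin(thb) (|beta_(n-1)| + |beta_(n+1)|).
   Squaring and summing, the squared terms are bounded by the norm of beta and the
   cross terms by sum |beta_n beta_(n+1)| and sum |beta_n beta_(n+2)|; with
   sin^2(thb - th) = 1 - (cos thb cos th + sin thb sin th)^2 this is exactly the
   claimed bound. *)

From HB Require Import structures.
From mathcomp Require Import all_boot all_order all_algebra.
From mathcomp Require Import complex.
From mathcomp Require Import all_classical all_reals all_analysis.
From mathcomp Require Import zify ring lra.
Import Order.TTheory GRing.Theory Num.Theory.
Import numFieldNormedType.Exports.
Import Normc.
Local Open Scope ring_scope.
Local Open Scope complex_scope.
Local Open Scope classical_set_scope.
Set Implicit Arguments. Unset Strict Implicit. Unset Printing Implicit Defensive.

Section ComplexModulus.
Variable R : realType.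
Implicit Types (z w : R[i]) (x : R).

Lemma absC_normc z : absC z = normc z.
Proof. by case: z. Qed.

Lemma sqnormC_absC z : sqnormC z = absC z ^+ 2.
Proof. by case: z => a b; rewrite /absC sqr_sqrtr // addr_ge0 ?sqr_ge0. Qed.

Lemma absC_ge0 z : 0 <= absC z.
Proof. exact: sqrtr_ge0. Qed.

Lemma absC0 : absC (0 : R[i]) = 0.
Proof. by rewrite absC_normc normc0. Qed.

Lemma absCM z w : absC (z * w) = absC z * absC w.
Proof. by rewrite !absC_normc normcM. Qed.

Lemma absCN z : absC (- z) = absC z.
Proof. by rewrite !absC_normc normcN. Qed.

Lemma absCD z w : absC (z + w) <= absC z + absC w.
Proof. by rewrite !absC_normc le_normcD. Qed.

Lemma absCJ z : absC z^* = absC z.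
Proof. by case: z => a b; rewrite /absC /= sqrrN. Qed.

Lemma absC_real x : absC x%:C = `|x|.
Proof. by rewrite /absC /= expr0n /= addr0 sqrtr_sqr. Qed.

Lemma absC_expi x : absC (expi x) = 1.
Proof. by rewrite /absC /= cos2Dsin2 sqrtr1. Qed.

End ComplexModulus.

Section KrausOperators.
Variables (R : realType) (thb : R) (al ga ph : nat -> R) (beta : nat -> R[i]).
Hypothesis beta0 : beta 0%N = 0.
Local Notation U := (Ublock thb al ga ph).
Local Notation K := (Kraus thb al ga ph beta).

Lemma USB_elem_mul_beta i n j m :
  USB_elem thb al ga ph i n j m * beta m =
  (if (n + i == m + j)%N then U (n + i)%N i j else 0) * beta m.
Proof.
rewrite /USB_elem; case: m => [|m]; first by rewrite beta0 !mulr0.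
by rewrite !andbF add0r; case: eqP => [->|]; rewrite ?andbF ?addSn.
Qed.

Lemma Kraus_entry n i j :
  K n i j = if (j <= n + i)%N then U (n + i)%N i j * beta (n + i - j)%N else 0.
Proof.
rewrite /Kraus mxE; under eq_bigr do rewrite USB_elem_mul_beta.
case: leqP => [le_j_ni | lt_ni_j].
  have lt_m : (n + i - j < n.+2)%N by have := ltn_ord i; lia.
  rewrite (bigD1 (Ordinal lt_m)) //= subnK // eqxx big1 ?addr0 // => m /eqP ne_m.
  case: eqP => [e|_]; last by rewrite mul0r.
  by exfalso; apply: ne_m; apply: val_inj => /=; lia.
rewrite big1 // => m _; case: eqP => [e|_]; last by rewrite mul0r.
by exfalso; lia.
Qed.

End KrausOperators.

Section TraceBound.
Variable R : realType.

Lemma mxtrace_adjmx_mul (M N : 'M[R[i]]_2) :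
  \tr (adjmx M *m N) = \sum_(i < 2) \sum_(j < 2) (M j i)^* * N j i.
Proof. by apply: eq_bigr => i _; rewrite mxE; apply: eq_bigr => j _; rewrite !mxE. Qed.

Lemma absC_Vtarget (theta gamma phi : R) (i j : 'I_2) :
  absC (Vtarget theta gamma phi i j) =
  if i == j then `|cos theta| else `|sin theta|.
Proof.
rewrite mxE; case: i => [[|[|//]] ?]; case: j => [[|[|//]] ?] /=;
by rewrite ?absCM ?absCN ?absC_real ?absC_expi ?mulr1.
Qed.

Lemma absC_Ublock (thb : R) al ga ph n (i j : 'I_2) :
  absC (Ublock thb al ga ph n i j) =
  if i == j then `|cos thb| else `|sin thb|.
Proof.
rewrite mxE; case: i => [[|[|//]] ?]; case: j => [[|[|//]] ?] /=;
by rewrite ?absCM ?absCN ?absC_real ?absC_expi ?mulr1.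
Qed.

Lemma absC_trace_Kraus_le (theta gamma phi thb : R) al ga ph (beta : nat -> R[i])
    (beta0 : beta 0%N = 0) n :
  absC (\tr (adjmx (Vtarget theta gamma phi) *m Kraus thb al ga ph beta n)) <=
  2 * (`|cos theta| * `|cos thb|) * absC (beta n)
  + `|sin theta| * `|sin thb| * (absC (beta n.-1) + absC (beta n.+1)).
Proof.
rewrite mxtrace_adjmx_mul !big_ord_recr !big_ord0 /= !add0r.
have absCD4 (w x y z : R[i]) :
    absC (w + x + (y + z)) <= absC w + absC x + (absC y + absC z).
  by rewrite (le_trans (absCD _ _)) // lerD // (le_trans (absCD _ _)).
apply: le_trans (absCD4 _ _ _ _) _.
rewrite !absCM !absCJ !absC_Vtarget !Kraus_entry //.
case: n => [|n] /=;
  rewrite ?absCM ?absC_Ublock ?addn0 ?addn1 ?subn0 ?subn1 /= ?beta0 ?absC0.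
all: by rewrite le_eqVlt; apply/orP; left; apply/eqP; ring.
Qed.
End TraceBound.

Section NonnegativeSeries.
Variable R : realType.
Implicit Types (u F : nat -> R) (B : R).

Lemma nonneg_series_cvgn u B : (forall n, 0 <= u n) ->
  (forall N, \sum_(0 <= n < N) u n <= B) ->
  cvgn (fun N => \sum_(0 <= n < N) u n).
Proof.
move=> u_ge0 u_le; apply: nondecreasing_is_cvgn.
  by apply: nondecreasing_series => n _ _; apply: u_ge0.
by exists B => _ [N _ <-].
Qed.

Lemma nonneg_series_le_limn u B : (forall n, 0 <= u n) ->
  (forall N, \sum_(0 <= n < N) u n <= B) ->
  forall N, \sum_(0 <= n < N) u n <= limn (fun N => \sum_(0 <= n < N) u n).
Proof.
move=> u_ge0 u_le; apply: nondecreasing_cvgn_le; last exact: nonneg_series_cvgn u_le.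
by apply: nondecreasing_series => n _ _; apply: u_ge0.
Qed.

Lemma limn_nonneg_series_le u B : (forall n, 0 <= u n) ->
  (forall N, \sum_(0 <= n < N) u n <= B) ->
  limn (fun N => \sum_(0 <= n < N) u n) <= B.
Proof.
move=> u_ge0 u_le; apply: limr_le; first exact: nonneg_series_cvgn u_le.
by apply: nearW.
Qed.

Lemma sum_predn_le F B : F 0%N = 0 -> (forall N, \sum_(0 <= n < N) F n <= B) ->
  forall N, \sum_(0 <= n < N) F n.-1 <= B.
Proof.
move=> F0 F_le [|N]; first by rewrite big_geq // (le_trans _ (F_le 0%N)) ?big_geq.
by rewrite big_nat_recl //= F0 add0r.
Qed.

Lemma sum_addn_le F B k : (forall n, 0 <= F n) ->
  (forall N, \sum_(0 <= n < N) F n <= B) ->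
  forall N, \sum_(0 <= n < N) F (n + k)%N <= B.
Proof.
move=> F_ge0 F_le N; apply: le_trans (F_le (N + k)%N).
have -> : \sum_(0 <= n < N) F (n + k)%N = \sum_(k <= n < N + k) F n.
  by rewrite -{2}[k]add0n big_addn addnK.
by rewrite [leRHS](big_cat_nat (n := k)) ?leq_addl //= lerDr sumr_ge0.
Qed.

Lemma nonneg_series_le_lim u l : (forall n, 0 <= u n) ->
  series u @ \oo --> l -> forall N, \sum_(0 <= n < N) u n <= l.
Proof.
move=> u_ge0 u_l N.
have u_nd : nondecreasing_seq (series u).
  by apply: nondecreasing_series => n _ _; apply: u_ge0.
by have := nondecreasing_cvgn_le u_nd (cvgP _ u_l) N; rewrite (cvg_lim _ u_l).
Qed.

End NonnegativeSeries.

Section NeighbourCorrelations.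
Variables (R : realType) (a : nat -> R).
Hypotheses (a0 : a 0%N = 0)
  (a_sq_le1 : forall N, \sum_(0 <= n < N) a n ^+ 2 <= 1).

Lemma sum_mul_shift_le1 k N : \sum_(0 <= n < N) a n * a (n + k)%N <= 1.
Proof.
have amgm n : 2 * (a n * a (n + k)%N) <= a n ^+ 2 + a (n + k)%N ^+ 2.
  by rewrite -subr_ge0 (_ : _ - _ = (a n - a (n + k)%N) ^+ 2) ?sqr_ge0 //; ring.
rewrite -(@ler_pM2l _ 2) // mulr_sumr mulr1.
apply: le_trans (ler_sum _ (fun n _ => amgm n)) _; rewrite big_split /=.
rewrite -[2]/(1 + 1) lerD ?a_sq_le1 //.
exact: (sum_addn_le k (fun n => sqr_ge0 (a n)) a_sq_le1).
Qed.

Lemma sum_sq_neighbours_le x y P1 P2 : 0 <= x -> 0 <= y ->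
  (forall N, \sum_(0 <= n < N) a n * a n.+1 <= P1) ->
  (forall N, \sum_(0 <= n < N) a n * a n.+2 <= P2) ->
  forall N, \sum_(0 <= n < N) (x * a n + y * (a n.-1 + a n.+1)) ^+ 2
            <= x ^+ 2 + 2 * y ^+ 2 + 4 * x * y * P1 + 2 * y ^+ 2 * P2.
Proof.
move=> x0 y0 P1_ge P2_ge N.
have pred_sq : \sum_(0 <= n < N) a n.-1 ^+ 2 <= 1.
  by apply: (sum_predn_le (F := fun n => a n ^+ 2)); rewrite /= ?a0 ?expr0n.
have succ_sq : \sum_(0 <= n < N) a n.+1 ^+ 2 <= 1.
  under eq_bigr do rewrite -addn1.
  exact: (sum_addn_le 1 (fun n => sqr_ge0 (a n)) a_sq_le1).
have pred_succ1 : \sum_(0 <= n < N) a n * a n.-1 <= P1.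
  rewrite (eq_bigr (fun n => a n.-1 * a n.-1.+1)); last first.
    by move=> [|n] _; rewrite ?a0 ?mul0r // mulrC.
  by apply: (sum_predn_le (F := fun n => a n * a n.+1)); rewrite /= ?a0 ?mul0r.
have pred_succ2 : \sum_(0 <= n < N) a n.-1 * a n.+1 <= P2.
  rewrite (eq_bigr (fun n => a n.-1 * a n.-1.+2)); last first.
    by move=> [|n] _; rewrite ?a0 ?mul0r.
  by apply: (sum_predn_le (F := fun n => a n * a n.+2)); rewrite /= ?a0 ?mul0r.
have expand : \sum_(0 <= n < N) (x * a n + y * (a n.-1 + a n.+1)) ^+ 2 =
  x ^+ 2 * \sum_(0 <= n < N) a n ^+ 2
  + y ^+ 2 * \sum_(0 <= n < N) a n.-1 ^+ 2 + y ^+ 2 * \sum_(0 <= n < N) a n.+1 ^+ 2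
  + 2 * x * y * \sum_(0 <= n < N) a n * a n.-1
  + 2 * x * y * \sum_(0 <= n < N) a n * a n.+1
  + 2 * y ^+ 2 * \sum_(0 <= n < N) a n.-1 * a n.+1.
  by rewrite !mulr_sumr -!big_split; apply: eq_bigr => n _ /=; ring.
rewrite expand [leRHS](_ : _ = x ^+ 2 * 1 + y ^+ 2 * 1 + y ^+ 2 * 1
  + 2 * x * y * P1 + 2 * x * y * P1 + 2 * y ^+ 2 * P2); last by ring.
by repeat apply: lerD; apply: ler_wpM2l; rewrite ?mulr_ge0 ?sqr_ge0.
Qed.

End NeighbourCorrelations.

Section BatteryCorrelations.
Variables (R : realType) (beta : nat -> R[i]).
Hypotheses (beta0 : beta 0%N = 0)
  (beta_sq_le1 : forall N, \sum_(0 <= n < N) absC (beta n) ^+ 2 <= 1).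

Lemma sum_absC_shift_le_limn k (s : nat -> nat) : (forall n, s n = (n + k)%N) ->
  forall N, \sum_(0 <= n < N) absC (beta n) * absC (beta (s n))
    <= limn (fun N => \sum_(1 <= n < N) absC (beta n * beta (s n))).
Proof.
move=> sE.
have -> : (fun N => \sum_(1 <= n < N) absC (beta n * beta (s n))) =
          (fun N => \sum_(0 <= n < N) absC (beta n) * absC (beta (s n))).
  apply: funext => -[|N]; first by rewrite !big_geq.
  rewrite [RHS]big_ltn // beta0 absC0 mul0r add0r.
  by apply: eq_bigr => n _; rewrite absCM.
apply: (nonneg_series_le_limn (B := 1)) => [n|N]; first by rewrite mulr_ge0 ?absC_ge0.
under eq_bigr do rewrite sE.
by apply: sum_mul_shift_le1; rewrite ?beta0 ?absC0.
Qed.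

End BatteryCorrelations.

Lemma cos_sin_ge0_pihalf (R : realType) (x : R) :
  0 <= x <= pi / 2 -> 0 <= cos x /\ 0 <= sin x.
Proof.
move=> /andP[x_ge0 x_le]; have := pi_ge0 R.
by split; [rewrite cos_ge0_pihalf // x_le andbT | rewrite sin_ge0_pi // x_ge0]; lra.
Qed.

Theorem mainTheorem4 (R : realType) (theta gamma phi thb : R)
    (al ga ph : nat -> R) (beta : nat -> R[i]) :
  0 <= theta <= pi / 2 ->
  0 <= thb <= pi / 2 ->
  beta 0%N = 0 ->
  (series (fun n => sqnormC (beta n)) @ \oo --> (1 : R)) ->
  sin (thb - theta) ^+ 2
    + 4^-1 * (sin (2 * thb) * sin (2 * theta) * Q1 beta
              + sin thb ^+ 2 * sin theta ^+ 2 * Q2 beta)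
  <= choi_infidelity (Vtarget theta gamma phi) (Kraus thb al ga ph beta).
Proof.
move=> /cos_sin_ge0_pihalf[cos_theta_ge0 sin_theta_ge0].
move=> /cos_sin_ge0_pihalf[cos_thb_ge0 sin_thb_ge0] beta0 beta_normed.
have beta_sq_le1 N : \sum_(0 <= n < N) absC (beta n) ^+ 2 <= 1.
  under eq_bigr do rewrite -sqnormC_absC.
  by apply: (nonneg_series_le_lim _ beta_normed) => n; rewrite sqnormC_absC sqr_ge0.
set x := 2 * (cos theta * cos thb); set y := sin theta * sin thb.
pose P1 := limn (fun N => \sum_(1 <= n < N) absC (beta n * beta n.+1)).
pose P2 := limn (fun N => \sum_(1 <= n < N) absC (beta n * beta n.+2)).
have P1_ge := sum_absC_shift_le_limn beta0 beta_sq_le1 (fun n => esym (addn1 n)).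
have P2_ge := sum_absC_shift_le_limn beta0 beta_sq_le1 (fun n => esym (addn2 n)).
pose T n := \tr (adjmx (Vtarget theta gamma phi) *m Kraus thb al ga ph beta n).
have T_le n : sqnormC (T n)
    <= (x * absC (beta n) + y * (absC (beta n.-1) + absC (beta n.+1))) ^+ 2.
  have := @absC_trace_Kraus_le R theta gamma phi thb al ga ph beta beta0 n.
  rewrite sqnormC_absC !ger0_norm // -/x -/y -/(T n) => T_le.
  by rewrite !expr2 ler_pM ?absC_ge0.
have lim_le : limn (fun N => \sum_(0 <= n < N) sqnormC (T n))
    <= x ^+ 2 + 2 * y ^+ 2 + 4 * x * y * P1 + 2 * y ^+ 2 * P2.
  apply: limn_nonneg_series_le => [n|N]; first by rewrite sqnormC_absC sqr_ge0.
  apply: le_trans (ler_sum _ (fun n _ => T_le n)) _.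
  by apply: sum_sq_neighbours_le; rewrite ?beta0 ?absC0 ?mulr_ge0.
have sin_sub_sqr : sin (thb - theta) ^+ 2
    = 1 - (cos thb * cos theta + sin thb * sin theta) ^+ 2.
  by rewrite sin2cos2 cosB.
rewrite /choi_infidelity /Q1 /Q2 -/P1 -/P2 sin_sub_sqr !mulr_natl !sin_mulr2n !mulr2n.
move: lim_le; rewrite /x /y.
lra.
Qed.
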